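(* Let $R$ and $Q$ be finite sequences of formulas and $I,J$ models. If $I\le_{\emptyset R\cdot Q}J$, then $I\le_{\emptyset Q}J$.
   Context: Propositional models are truth assignments over a finite set of variables; a formula used where a set of models is expected stands for its set of models. A doxastic state is a sequence $C=[C(0),\ldots,C(k)]$ of nonempty, pairwise disjoint sets of models covering all models; $I\le_C J$ iff $I\in C(i)$, $J\in C(j)$ with $i\le j$. The flat doxastic state $\emptyset$ is $[\text{all models}]$. Lexicographic revision: $C\,\mathrm{lex}(A)=[C(0)\cap A,\ldots,C(k)\cap A,C(0)\setminus A,\ldots,C(k)\setminus A]$, empty sets discarded. For a sequence of formulas $T=[T_1,\ldots,T_n]$, $\emptyset T$ denotes $\emptyset$ revised lexicographically by $T_1$, then $T_2$, ..., then $T_n$. $R\cdot Q$ is concatenation. *)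

From mathcomp Require Import all_boot.
Set Implicit Arguments. Unset Strict Implicit. Unset Printing Implicit Defensive.

Definition model (n : nat) := {ffun 'I_n -> bool}.

Inductive formula (n : nat) : Type :=
| FVar : 'I_n -> formula n
| FTop : formula n
| FBot : formula n
| FNot : formula n -> formula n
| FAnd : formula n -> formula n -> formula n
| FOr  : formula n -> formula n -> formula n
| FImp : formula n -> formula n -> formula n.

Fixpoint holds n (I : model n) (F : formula n) : bool :=
  match F with
  | FVar x => I x
  | FTop => true
  | FBot => false
  | FNot A => ~~ holds I A
  | FAnd A B => holds I A && holds I B
  | FOr A B => holds I A || holds I B
  | FImp A B => holds I A ==> holds I B
  end.

Definition mods n (F : formula n) : {set model n} := [set I | holds I F].

Definition doxstate n := seq {set model n}.

Definition is_doxstate n (C : doxstate n) : Prop :=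
  [/\ forall i, i < size C -> nth set0 C i != set0,
      forall i j, i < size C -> j < size C -> i != j ->
        [disjoint nth set0 C i & nth set0 C j]
    & forall I : model n, exists2 i, i < size C & I \in nth set0 C i].

Definition dle n (C : doxstate n) (I J : model n) : Prop :=
  exists i j, [/\ i < size C, j < size C, i <= j,
                  I \in nth set0 C i & J \in nth set0 C j].

Definition flat n : doxstate n := [:: [set: model n]].

Definition lex n (C : doxstate n) (A : {set model n}) : doxstate n :=
  [seq X <- [seq X :&: A | X <- C] ++ [seq X :\: A | X <- C] | X != set0].

(* emptyset T : flat state revised by T_1, then T_2, ..., then T_n *)
Definition revise n (T : seq (formula n)) : doxstate n :=
  foldl (fun C F => lex C (mods F)) (flat n) T.

From mathcomp Require Import all_boot.
Set Implicit Arguments. Unset Strict Implicit. Unset Printing Implicit Defensive.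

(* Lexicographic revision is monotone in the prior state: if [<=_C] is
   contained in [<=_D] and the classes of D cover all models, then
   [<=_(C lex A)] is contained in [<=_(D lex A)], since a pair split by A is
   ordered in [D lex A] as soon as both models occur somewhere in D.  The flat
   state orders every pair, so [<=_(emptyset R)] is contained in [<=_flat], and
   revising both by Q gives the inclusion of [<=_(emptyset R.Q)] in
   [<=_(emptyset Q)]. *)

Section Preorder.

Variable n : nat.
Implicit Types (C D : doxstate n) (A : {set model n}) (I J : model n).

Definition covered C I : bool := has (fun X : {set model n} => I \in X) C.

Definition full C : Prop := forall I, covered C I.

Fixpoint dleb C I J : bool :=
  if C is X :: C' then (I \in X) && covered C J || dleb C' I J else false.

Lemma dleP C I J : reflect (dle C I J) (dleb C I J).
Proof.
apply: (iffP idP).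
  elim: C => // X C IH /orP[/andP[IX /hasP[Y YC JY]]|/IH[i [j [iC jC ij Ii Jj]]]].
    by exists 0, (index Y (X :: C)); rewrite index_mem nth_index.
  by exists i.+1, j.+1.
case=> i [j []]; elim: C i j => // X C IH [|i] [|j] //= iC jC ij Ii Jj.
- by rewrite Ii Jj.
- rewrite Ii (_ : covered C J) ?orbT //; apply/hasP.
  by exists (nth set0 C j); rewrite ?mem_nth.
- by rewrite (IH i j) ?orbT.
Qed.

Lemma covered_cat C D I : covered (C ++ D) I = covered C I || covered D I.
Proof. exact: has_cat. Qed.

Lemma dleb_cat C D I J :
  dleb (C ++ D) I J = [|| dleb C I J, covered C I && covered D J | dleb D I J].
Proof.
elim: C => //= X C ->; rewrite /covered /= has_cat -!/(covered _ _).
by case: (I \in X); case: (J \in X); case: (covered C I); case: (covered C J);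
   case: (covered D J); case: (dleb C I J).
Qed.

Lemma covered_filter0 C I : covered [seq X <- C | X != set0] I = covered C I.
Proof.
by elim: C => //= X C IH; case: eqP => [->|_]; rewrite /= -/(covered _ _) IH ?inE.
Qed.

Lemma dleb_filter0 C I J : dleb [seq X <- C | X != set0] I J = dleb C I J.
Proof.
elim: C => //= X C IH; case: eqP => [->|_] /=; rewrite IH ?inE //.
by rewrite covered_filter0.
Qed.

Lemma covered_mapI C A I : covered [seq X :&: A | X <- C] I = (I \in A) && covered C I.
Proof.
by elim: C => /= [|X C ->]; rewrite ?andbF // inE; case: (I \in X); case: (I \in A).
Qed.

Lemma covered_mapD C A I : covered [seq X :\: A | X <- C] I = (I \notin A) && covered C I.
Proof.
by elim: C => /= [|X C ->]; rewrite ?andbF // inE; case: (I \in X); case: (I \in A).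
Qed.

Lemma dleb_mapI C A I J :
  dleb [seq X :&: A | X <- C] I J = [&& I \in A, J \in A & dleb C I J].
Proof.
elim: C => /= [|X C ->]; first by rewrite !andbF.
rewrite covered_mapI !inE.
by case: (I \in X); case: (J \in X); case: (I \in A); case: (J \in A);
   case: (covered C J); case: (dleb C I J).
Qed.

Lemma dleb_mapD C A I J :
  dleb [seq X :\: A | X <- C] I J = [&& I \notin A, J \notin A & dleb C I J].
Proof.
elim: C => /= [|X C ->]; first by rewrite !andbF.
rewrite covered_mapD !inE.
by case: (I \in X); case: (J \in X); case: (I \in A); case: (J \in A);
   case: (covered C J); case: (dleb C I J).
Qed.

Lemma covered_lex C A I : covered (lex C A) I = covered C I.
Proof.
rewrite covered_filter0 covered_cat covered_mapI covered_mapD.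
by case: (I \in A); rewrite ?orbF.
Qed.

Lemma dleb_lex C A I J :
  dleb (lex C A) I J =
  [|| [&& I \in A, J \in A & dleb C I J],
      [&& I \in A, J \notin A, covered C I & covered C J] |
      [&& I \notin A, J \notin A & dleb C I J]].
Proof.
rewrite dleb_filter0 dleb_cat dleb_mapI dleb_mapD covered_mapI covered_mapD.
by case: (I \in A); case: (J \in A); case: (covered C I); case: (covered C J).
Qed.

Lemma full_lex C A : full C -> full (lex C A).
Proof. by move=> fullC I; rewrite covered_lex. Qed.

Lemma dleb_lex_mono C D A :
  full D -> subrel (dleb C) (dleb D) -> subrel (dleb (lex C A)) (dleb (lex D A)).
Proof.
move=> fullD CD I J; rewrite !dleb_lex !fullD.
by case: (I \in A); case: (J \in A); rewrite //= ?orbF; apply: CD.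
Qed.

Definition revise_from C (T : seq (formula n)) : doxstate n :=
  foldl (fun C F => lex C (mods F)) C T.

Lemma dleb_revise_from_mono C D T :
  full D -> subrel (dleb C) (dleb D) ->
  subrel (dleb (revise_from C T)) (dleb (revise_from D T)).
Proof.
elim: T C D => //= F T IH C D fullD CD; apply: IH; first exact: full_lex.
exact: dleb_lex_mono.
Qed.

Lemma full_flat : full (flat n).
Proof. by move=> I; rewrite /covered /= inE. Qed.

Lemma dleb_flat I J : dleb (flat n) I J.
Proof. by rewrite /= !inE. Qed.

End Preorder.

Theorem mainTheorem19 (n : nat) (R Q : seq (formula n)) (I J : model n) :
  dle (revise (R ++ Q)) I J -> dle (revise Q) I J.
Proof.
rewrite /revise foldl_cat -!/(revise_from _ _) => /dleP leRQ; apply/dleP.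
exact: dleb_revise_from_mono (@full_flat n) (fun K L _ => dleb_flat K L) _ _ leRQ.
Qed.
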